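(* Let $a,b,c,d,P_{\max}>0$ and set $\alpha=d(1+bP_{\max})$. Consider the frontier curve $\Phi_2$, given as the graph of $$f(r_1)=\log_2\!\left(1+\frac{cP_{\max}}{1+\frac{d}{a}(1+bP_{\max})(2^{r_1}-1)}\right),\qquad r_1\ge 0 .$$ Let $P_1=\frac1a(1+bP_{\max})(2^{r_1}-1)$ be the corresponding power of user 1. Then $$\operatorname{sign}\big(f''(r_1)\big)=\operatorname{sign}\Big((\alpha+adP_1)^2-(a-\alpha)(a-\alpha+acP_{\max})\Big)=\operatorname{sign}(P_1-Q_1),$$ where the inflection threshold is $$Q_1=\frac{\Re\!\left(\sqrt{(a-\alpha)(a-\alpha+acP_{\max})}\right)-\alpha}{ad}.$$ In particular, $\Phi_2$ restricted to $P_1\in[0,P_{\max}]$ is concave if $Q_1\ge P_{\max}$ and convex if $Q_1\le 0$. If $0<Q_1<P_{\max}$, it is concave for $P_1\in[0,Q_1]$ and convex for $P_1\in[Q_1,P_{\max}]$.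
   Context: The channel power gains are normalized by the noise variance: $a$ (direct gain of user 1), $b$ (interference gain from transmitter 2 at receiver 1), $c$ (direct gain of user 2), $d$ (interference gain from transmitter 1 at receiver 2). The rates are $R_1(P_1,P_2)=\log_2\!\left(1+\frac{aP_1}{1+bP_2}\right)$ and $R_2(P_1,P_2)=\log_2\!\left(1+\frac{cP_2}{1+dP_1}\right)$. The curve $\Phi_2$ is the set of rate pairs obtained with $P_2=P_{\max}$ and $P_1$ ranging over $[0,P_{\max}]$. $\Re$ denotes the real part, and the square root of a negative number is purely imaginary. *)

From Stdlib Require Import Reals Lra.
Open Scope R_scope.

Definition log2 (x : R) : R := ln x / ln 2.

Definition sgn (x : R) : R :=
  if Rlt_dec 0 x then 1 else if Rlt_dec x 0 then -1 else 0.

(* real part of the principal square root: sqrt x if x >= 0, 0 otherwise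
   (the square root of a negative number is purely imaginary) *)
Definition re_sqrt (x : R) : R := if Rle_dec 0 x then sqrt x else 0.

Definition alpha (b d Pmax : R) : R := d * (1 + b * Pmax).

Definition frontier (a b c d Pmax : R) (r1 : R) : R :=
  log2 (1 + c * Pmax / (1 + d / a * (1 + b * Pmax) * (Rpower 2 r1 - 1))).

Definition P1_of (a b Pmax : R) (r1 : R) : R :=
  / a * (1 + b * Pmax) * (Rpower 2 r1 - 1).

Definition Q1 (a b c d Pmax : R) : R :=
  (re_sqrt ((a - alpha b d Pmax) * (a - alpha b d Pmax + a * c * Pmax))
     - alpha b d Pmax) / (a * d).

Definition concave_on (f : R -> R) (S : R -> Prop) : Prop :=
  forall x y t, S x -> S y -> 0 <= t <= 1 ->
    t * f x + (1 - t) * f y <= f (t * x + (1 - t) * y).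

Definition convex_on (f : R -> R) (S : R -> Prop) : Prop :=
  forall x y t, S x -> S y -> 0 <= t <= 1 ->
    f (t * x + (1 - t) * y) <= t * f x + (1 - t) * f y.

(* Write u = 2^r, m = (d/a)(1 + b Pmax), C = c Pmax and D = 1 + m (u - 1).
   Then f(r) = log2 (1 + C/D) and a direct computation gives
     f'(r)  = - C m u / (D (D + C)),
     f''(r) = C m u ln 2 (m^2 u^2 - E) / (D (D + C))^2,  E = (1 - m)(1 - m + C),
   so sgn f'' = sgn (m^2 u^2 - E).  In the original parameters
   m^2 u^2 - E = a^-2 ((alpha + a d P1)^2 - (a - alpha)(a - alpha + a c Pmax)),
   and since alpha + a d P1 = a m u > 0, the difference of squares has the sign
   of (alpha + a d P1) - Re sqrt((a - alpha)(a - alpha + a c Pmax)), i.e. of P1 - Q1.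
   For the concavity statements we avoid second-derivative tests: the
   difference f'(y) - f'(x) is an explicit positive multiple of
   (u_y - u_x)(m^2 u_x u_y - E), so f' is antitone where P1 <= Q1 and
   monotone where P1 >= Q1, and a mean-value argument turns monotonicity of
   the derivative into concavity/convexity on order-convex sets. *)

From Stdlib Require Import Reals Lra Psatz.
From Coquelicot Require Import Coquelicot.
Open Scope R_scope.

Lemma sgn_mul_pos (k x : R) : 0 < k -> sgn (k * x) = sgn x.
Proof.
  intro hk. unfold sgn.
  destruct (Rlt_dec 0 (k * x)), (Rlt_dec 0 x); try reflexivity;
  destruct (Rlt_dec (k * x) 0), (Rlt_dec x 0); try reflexivity; exfalso; nra.
Qed.

Lemma sgn_eq_nonpos (x y : R) : sgn x = sgn y -> y <= 0 -> x <= 0.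
Proof.
  unfold sgn; intros h hy.
  destruct (Rlt_dec 0 x), (Rlt_dec 0 y); try lra;
  destruct (Rlt_dec y 0), (Rlt_dec x 0); lra.
Qed.

Lemma sgn_eq_nonneg (x y : R) : sgn x = sgn y -> 0 <= y -> 0 <= x.
Proof.
  unfold sgn; intros h hy.
  destruct (Rlt_dec 0 x), (Rlt_dec 0 y); try lra;
  destruct (Rlt_dec y 0), (Rlt_dec x 0); lra.
Qed.

(* For X > 0, X^2 - Y has the sign of X - Re sqrt Y: factor X^2 - Y when
   Y >= 0, and note both sides are positive when Y < 0. *)
Lemma sgn_sq_sub (X Y k : R) : 0 < X -> 0 < k ->
  sgn (X ^ 2 - Y) = sgn ((X - re_sqrt Y) / k).
Proof.
  intros hX hk. unfold re_sqrt.
  destruct (Rle_dec 0 Y) as [hY | hY].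
  - pose proof (sqrt_pos Y) as hs.
    replace (X ^ 2 - Y) with ((X + sqrt Y) * (X - sqrt Y))
      by (rewrite <- (sqrt_sqrt Y hY) at 3; ring).
    replace ((X - sqrt Y) / k) with (/ k * (X - sqrt Y)) by (field; lra).
    rewrite !sgn_mul_pos; [reflexivity | apply Rinv_0_lt_compat | ]; lra.
  - assert (0 < X ^ 2 - Y) by nra.
    assert (0 < (X - 0) / k) by (apply Rdiv_lt_0_compat; lra).
    unfold sgn. destruct (Rlt_dec 0 (X ^ 2 - Y)), (Rlt_dec 0 ((X - 0) / k)); lra.
Qed.

Definition order_convex (S : R -> Prop) : Prop :=
  forall x y z, S x -> S y -> x <= z <= y -> S z.

(* Chord inequality for x < y: by the mean value theorem on [x, z] and [z, y]
   the two chord slopes are derivatives g c1, g c2 with c1 < c2, and an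
   antitone derivative puts the function above its chord. *)
Lemma chord_below_of_antitone_deriv (f g : R -> R) (S : R -> Prop) x y t :
  order_convex S ->
  (forall z, S z -> derivable_pt_lim f z (g z)) ->
  (forall z w, S z -> S w -> z <= w -> g w <= g z) ->
  S x -> S y -> x < y -> 0 < t < 1 ->
  t * f x + (1 - t) * f y <= f (t * x + (1 - t) * y).
Proof.
  intros hS hd hg Sx Sy hxy ht.
  set (z := t * x + (1 - t) * y).
  assert (hxz : x < z) by (unfold z; nra).
  assert (hzy : z < y) by (unfold z; nra).
  assert (hin : forall w, x <= w <= y -> S w) by (intros w hw; exact (hS x y w Sx Sy hw)).
  destruct (MVT_cor2 f g x z hxz) as [c1 [E1 hc1]].
  { intros w hw. apply hd, hin. lra. }
  destruct (MVT_cor2 f g z y hzy) as [c2 [E2 hc2]].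
  { intros w hw. apply hd, hin. lra. }
  assert (hslopes : g c2 <= g c1) by (apply hg; try apply hin; lra).
  assert (hchord : t * f x + (1 - t) * f y - f z
                   = - (t * (1 - t) * (y - x) * (g c1 - g c2))).
  { replace (f x) with (f z - g c1 * (z - x)) by lra.
    replace (f y) with (f z + g c2 * (y - z)) by lra.
    unfold z; ring. }
  assert (0 <= t * (1 - t) * (y - x) * (g c1 - g c2))
    by (repeat apply Rmult_le_pos; lra).
  lra.
Qed.

Lemma concave_of_antitone_deriv (f g : R -> R) (S : R -> Prop) :
  order_convex S ->
  (forall z, S z -> derivable_pt_lim f z (g z)) ->
  (forall z w, S z -> S w -> z <= w -> g w <= g z) ->
  concave_on f S.
Proof.
  intros hS hd hg x y t Sx Sy ht.
  destruct (Req_dec t 0) as [-> | h0].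
  { replace (0 * x + (1 - 0) * y) with y by ring. lra. }
  destruct (Req_dec t 1) as [-> | h1].
  { replace (1 * x + (1 - 1) * x) with x by ring.
    replace (1 * x + (1 - 1) * y) with x by ring. lra. }
  destruct (Rtotal_order x y) as [lt | [-> | gt]].
  - apply (chord_below_of_antitone_deriv f g S); auto; lra.
  - replace (t * y + (1 - t) * y) with y by ring. lra.
  - pose proof (chord_below_of_antitone_deriv f g S y x (1 - t) hS hd hg Sy Sx gt
                  ltac:(lra)) as h.
    replace (t * x + (1 - t) * y) with ((1 - t) * y + (1 - (1 - t)) * x) by ring.
    lra.
Qed.

Lemma convex_of_monotone_deriv (f g : R -> R) (S : R -> Prop) :
  order_convex S ->
  (forall z, S z -> derivable_pt_lim f z (g z)) ->
  (forall z w, S z -> S w -> z <= w -> g z <= g w) ->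
  convex_on f S.
Proof.
  intros hS hd hg.
  assert (hneg : concave_on (fun z => - f z) S).
  { apply (concave_of_antitone_deriv _ (fun z => - g z)); auto.
    - intros z Sz. exact (derivable_pt_lim_opp f z (g z) (hd z Sz)).
    - intros z w Sz Sw hzw. specialize (hg z w Sz Sw hzw). lra. }
  intros x y t Sx Sy ht. specialize (hneg x y t Sx Sy ht). simpl in hneg. lra.
Qed.

Lemma order_convex_sublevel (g : R -> R) (B : R) :
  (forall x y, x <= y -> g x <= g y) ->
  order_convex (fun r => 0 <= r /\ g r <= B).
Proof.
  intros hg x y z [hx _] [_ hy] hz.
  pose proof (hg z y (proj2 hz)). split; lra.
Qed.

Lemma order_convex_band (g : R -> R) (A B : R) :
  (forall x y, x <= y -> g x <= g y) ->
  order_convex (fun r => 0 <= r /\ A <= g r /\ g r <= B).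
Proof.
  intros hg x y z [hx [hAx _]] [_ [_ hy]] hz.
  pose proof (hg z y (proj2 hz)). pose proof (hg x z (proj1 hz)). lra.
Qed.

Lemma ln2_pos : 0 < ln 2.
Proof. rewrite <- ln_1. apply ln_increasing; lra. Qed.

Section NormalizedCurve.

Variables m C : R.
Hypothesis hm : 0 < m.
Hypothesis hC : 0 < C.

Definition den (r : R) : R := 1 + m * (Rpower 2 r - 1).

Definition curve (r : R) : R := log2 (1 + C / den r).

Definition slope (r : R) : R := - C * m * Rpower 2 r / (den r * (den r + C)).

Definition excess : R := (1 - m) * (1 - m + C).

Definition curvature (r : R) : R :=
  C * m * Rpower 2 r * ln 2 * (m ^ 2 * Rpower 2 r ^ 2 - excess)
    / (den r * (den r + C)) ^ 2.

Lemma pow2_pos (r : R) : 0 < Rpower 2 r.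
Proof. apply exp_pos. Qed.

Lemma pow2_monotone (x y : R) : x <= y -> Rpower 2 x <= Rpower 2 y.
Proof. intro h. apply Rle_Rpower; lra. Qed.

Lemma pow2_ge1 (r : R) : 0 <= r -> 1 <= Rpower 2 r.
Proof. intro h. rewrite <- (Rpower_O 2) by lra. exact (pow2_monotone 0 r h). Qed.

Lemma den_ge1 (r : R) : 0 <= r -> 1 <= den r.
Proof. intro h. pose proof (pow2_ge1 r h). unfold den. nra. Qed.

(* The denominator stays positive slightly to the left of 0, since
   2^x >= 1 + x ln 2. *)
Lemma den_pos_near (x : R) : - (1 / (m * ln 2)) < x -> 0 < den x.
Proof.
  intro hx. pose proof ln2_pos.
  assert (hlin : -1 < m * ln 2 * x).
  { assert (m * ln 2 * (1 / (m * ln 2)) = 1) by (field; lra).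
    assert (0 < m * ln 2) by nra. nra. }
  pose proof (exp_ineq1_le (x * ln 2)). unfold den, Rpower. nra.
Qed.

Lemma curve_derive (r : R) : 0 < den r -> derivable_pt_lim curve r (slope r).
Proof.
  intro hD. apply is_derive_Reals. pose proof ln2_pos.
  unfold curve, slope, log2; unfold den, Rpower in *.
  auto_derive.
  - repeat split; try lra. apply Rplus_lt_0_compat; [lra | apply Rdiv_lt_0_compat; lra].
  - field. repeat split; lra.
Qed.

Lemma slope_derive (r : R) : 0 < den r -> derivable_pt_lim slope r (curvature r).
Proof.
  intro hD. apply is_derive_Reals.
  unfold slope, curvature, excess; unfold den, Rpower in *.
  auto_derive.
  - apply Rmult_integral_contrapositive_currified; lra.
  - field. split; lra.
Qed.

Lemma sgn_curvature (r : R) : 0 < den r ->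
  sgn (curvature r) = sgn (m ^ 2 * Rpower 2 r ^ 2 - excess).
Proof.
  intro hD. pose proof ln2_pos. pose proof (pow2_pos r).
  unfold curvature; unfold Rdiv.
  rewrite Rmult_comm, <- Rmult_assoc, (Rmult_comm _ (C * m * _ * _)).
  apply sgn_mul_pos. apply Rmult_lt_0_compat.
  - repeat apply Rmult_lt_0_compat; lra.
  - apply Rinv_0_lt_compat, pow_lt, Rmult_lt_0_compat; lra.
Qed.

Lemma slope_increment (x y : R) : 0 < den x -> 0 < den y ->
  exists k, 0 < k /\
    slope y - slope x
    = k * ((Rpower 2 y - Rpower 2 x) * (m ^ 2 * Rpower 2 x * Rpower 2 y - excess)).
Proof.
  intros hx hy.
  assert (hPx : 0 < den x * (den x + C)) by (apply Rmult_lt_0_compat; lra).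
  assert (hPy : 0 < den y * (den y + C)) by (apply Rmult_lt_0_compat; lra).
  exists (C * m / ((den x * (den x + C)) * (den y * (den y + C)))). split.
  - apply Rdiv_lt_0_compat; [nra | apply Rmult_lt_0_compat; lra].
  - unfold slope, excess. unfold den in *. field. split; lra.
Qed.

Lemma slope_antitone (x y : R) : 0 <= x -> x <= y ->
  m ^ 2 * Rpower 2 y ^ 2 <= excess -> slope y <= slope x.
Proof.
  intros hx hxy hE.
  pose proof (pow2_monotone x y hxy). pose proof (pow2_pos x).
  pose proof (den_ge1 x hx). pose proof (den_ge1 y ltac:(lra)).
  destruct (slope_increment x y) as [k [hk hinc]]; try lra.
  assert (m ^ 2 * Rpower 2 x * Rpower 2 y <= m ^ 2 * Rpower 2 y ^ 2) by nra.
  assert ((Rpower 2 y - Rpower 2 x) * (m ^ 2 * Rpower 2 x * Rpower 2 y - excess) <= 0)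
    by nra.
  nra.
Qed.

Lemma slope_monotone (x y : R) : 0 <= x -> x <= y ->
  excess <= m ^ 2 * Rpower 2 x ^ 2 -> slope x <= slope y.
Proof.
  intros hx hxy hE.
  pose proof (pow2_monotone x y hxy). pose proof (pow2_pos x).
  pose proof (den_ge1 x hx). pose proof (den_ge1 y ltac:(lra)).
  destruct (slope_increment x y) as [k [hk hinc]]; try lra.
  assert (m ^ 2 * Rpower 2 x ^ 2 <= m ^ 2 * Rpower 2 x * Rpower 2 y) by nra.
  assert (0 <= (Rpower 2 y - Rpower 2 x) * (m ^ 2 * Rpower 2 x * Rpower 2 y - excess))
    by nra.
  nra.
Qed.

End NormalizedCurve.

Section Frontier.

Variables a b c d Pmax : R.
Hypothesis ha : 0 < a.
Hypothesis hb : 0 < b.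
Hypothesis hc : 0 < c.
Hypothesis hd : 0 < d.
Hypothesis hP : 0 < Pmax.

Let m := d / a * (1 + b * Pmax).
Let C := c * Pmax.
Let al := alpha b d Pmax.
Let P1 := P1_of a b Pmax.
Let q := Q1 a b c d Pmax.

Let gap (r : R) : R :=
  (al + a * d * P1 r) ^ 2 - (a - al) * (a - al + a * c * Pmax).

Lemma m_pos : 0 < m.
Proof. unfold m. apply Rmult_lt_0_compat; [apply Rdiv_lt_0_compat | nra]; lra. Qed.

Lemma C_pos : 0 < C.
Proof. unfold C. nra. Qed.

Lemma frontier_normalized : frontier a b c d Pmax = curve m C.
Proof. reflexivity. Qed.

Lemma P1_monotone (x y : R) : x <= y -> P1 x <= P1 y.
Proof.
  intro h. pose proof (pow2_monotone x y h).
  assert (0 < / a * (1 + b * Pmax)) by (apply Rmult_lt_0_compat; [apply Rinv_0_lt_compat | nra]; lra).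
  unfold P1, P1_of. nra.
Qed.

Lemma P1_nonneg (r : R) : 0 <= r -> 0 <= P1 r.
Proof.
  intro h. pose proof (P1_monotone 0 r h).
  unfold P1, P1_of in *. rewrite Rpower_O in * by lra. lra.
Qed.

Lemma shifted_power (r : R) : al + a * d * P1 r = a * m * Rpower 2 r.
Proof. unfold al, alpha, P1, P1_of, m. field. lra. Qed.

Lemma gap_normalized (r : R) : gap r = a ^ 2 * (m ^ 2 * Rpower 2 r ^ 2 - excess m C).
Proof.
  unfold gap. rewrite shifted_power. unfold excess, m, C, al, alpha. field. lra.
Qed.

Lemma sgn_gap (r : R) : sgn (gap r) = sgn (P1 r - q).
Proof.
  replace (P1 r - q) with
    ((al + a * d * P1 r - re_sqrt ((a - al) * (a - al + a * c * Pmax))) / (a * d))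
    by (unfold q, Q1, al; field; lra).
  unfold gap. rewrite shifted_power. apply sgn_sq_sub.
  - pose proof (pow2_pos r). pose proof m_pos. apply Rmult_lt_0_compat; nra.
  - nra.
Qed.

Lemma below_threshold (r : R) : P1 r <= q -> m ^ 2 * Rpower 2 r ^ 2 <= excess m C.
Proof.
  intro h. pose proof (sgn_eq_nonpos _ _ (sgn_gap r) ltac:(lra)) as hg.
  rewrite gap_normalized in hg. assert (0 < a ^ 2) by nra. nra.
Qed.

Lemma above_threshold (r : R) : q <= P1 r -> excess m C <= m ^ 2 * Rpower 2 r ^ 2.
Proof.
  intro h. pose proof (sgn_eq_nonneg _ _ (sgn_gap r) ltac:(lra)) as hg.
  rewrite gap_normalized in hg. assert (0 < a ^ 2) by nra. nra.
Qed.

Lemma frontier_curvature_sign (r1 : R) : 0 <= r1 ->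
  exists (eps : R) (f1 : R -> R) (f2 : R),
    0 < eps /\
    (forall x, Rabs (x - r1) < eps -> derivable_pt_lim (frontier a b c d Pmax) x (f1 x)) /\
    derivable_pt_lim f1 r1 f2 /\
    sgn f2 = sgn (gap r1) /\
    sgn (gap r1) = sgn (P1 r1 - q).
Proof.
  intro hr1. pose proof m_pos as hm0. pose proof C_pos as hC0. pose proof ln2_pos.
  pose proof (den_ge1 m hm0 r1 hr1) as hD.
  exists (1 / (m * ln 2)), (slope m C), (curvature m C r1).
  split; [| split; [| split; [| split]]].
  - apply Rdiv_lt_0_compat; nra.
  - intros x hx. rewrite frontier_normalized. apply curve_derive; auto.
    apply den_pos_near; auto.
    pose proof (Rle_abs (- (x - r1))). rewrite Rabs_Ropp in *. lra.
  - apply slope_derive; auto. lra.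
  - rewrite sgn_curvature, gap_normalized, sgn_mul_pos by (auto; nra || lra).
    reflexivity.
  - apply sgn_gap.
Qed.

Lemma frontier_concave (S : R -> Prop) : order_convex S ->
  (forall r, S r -> 0 <= r /\ P1 r <= q) -> concave_on (frontier a b c d Pmax) S.
Proof.
  intros hS hsub. pose proof m_pos as hm0. pose proof C_pos as hC0.
  rewrite frontier_normalized.
  apply (concave_of_antitone_deriv _ (slope m C) S hS).
  - intros z Sz. apply curve_derive; auto.
    pose proof (den_ge1 m hm0 z (proj1 (hsub z Sz))). lra.
  - intros z w Sz Sw hzw. apply slope_antitone; auto.
    + apply hsub, Sz.
    + apply below_threshold, hsub, Sw.
Qed.

Lemma frontier_convex (S : R -> Prop) : order_convex S ->
  (forall r, S r -> 0 <= r /\ q <= P1 r) -> convex_on (frontier a b c d Pmax) S.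
Proof.
  intros hS hsub. pose proof m_pos as hm0. pose proof C_pos as hC0.
  rewrite frontier_normalized.
  apply (convex_of_monotone_deriv _ (slope m C) S hS).
  - intros z Sz. apply curve_derive; auto.
    pose proof (den_ge1 m hm0 z (proj1 (hsub z Sz))). lra.
  - intros z w Sz Sw hzw. apply slope_monotone; auto.
    + apply hsub, Sz.
    + apply above_threshold, hsub, Sz.
Qed.

End Frontier.

Theorem mainTheorem6 (a b c d Pmax : R)
  (ha : 0 < a) (hb : 0 < b) (hc : 0 < c) (hd : 0 < d) (hP : 0 < Pmax) :
  let f := frontier a b c d Pmax in
  let al := alpha b d Pmax in
  let P1 := P1_of a b Pmax in
  let q := Q1 a b c d Pmax in
  (forall r1 : R, 0 <= r1 ->
     exists (eps : R) (f1 : R -> R) (f2 : R),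
       0 < eps /\
       (forall x, Rabs (x - r1) < eps -> derivable_pt_lim f x (f1 x)) /\
       derivable_pt_lim f1 r1 f2 /\
       sgn f2 = sgn ((al + a * d * P1 r1) ^ 2
                     - (a - al) * (a - al + a * c * Pmax)) /\
       sgn ((al + a * d * P1 r1) ^ 2 - (a - al) * (a - al + a * c * Pmax))
         = sgn (P1 r1 - q)) /\
  (Pmax <= q -> concave_on f (fun r => 0 <= r /\ P1 r <= Pmax)) /\
  (q <= 0 -> convex_on f (fun r => 0 <= r /\ P1 r <= Pmax)) /\
  (0 < q < Pmax ->
     concave_on f (fun r => 0 <= r /\ P1 r <= q) /\
     convex_on f (fun r => 0 <= r /\ q <= P1 r /\ P1 r <= Pmax)).
Proof.
  intros f al P1 q; subst f al P1 q.
  pose proof (P1_monotone a b Pmax ha hb hP) as hmono.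
  pose proof (frontier_concave a b c d Pmax ha hb hc hd hP) as hconcave.
  pose proof (frontier_convex a b c d Pmax ha hb hc hd hP) as hconvex.
  split; [| split; [| split]].
  - exact (frontier_curvature_sign a b c d Pmax ha hb hc hd hP).
  - intro hq. apply hconcave.
    + apply order_convex_sublevel, hmono.
    + intros r [h0 h1]. split; lra.
  - intro hq. apply hconvex.
    + apply order_convex_sublevel, hmono.
    + intros r [h0 h1]. pose proof (P1_nonneg a b Pmax ha hb hP r h0). split; lra.
  - intro hq. split.
    + apply hconcave.
      * apply order_convex_sublevel, hmono.
      * intros r [h0 h1]. split; lra.
    + apply hconvex.
      * apply order_convex_band, hmono.
      * intros r [h0 [h1 h2]]. split; lra.
Qed.
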